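(* Let $G$ be a gap-free finite simple graph, $s\geq1$, $e_1,\dots,e_s$ edges of $G$ (repetitions allowed), and $G'$ the graph associated to $(I(G)^{s+1}:e_1\cdots e_s)^{\mathrm{pol}}$. Let $Y=\{y_1,\dots,y_l\}$ be a set of vertices of $G'$, and suppose $u,v\notin Y$ are vertices of $G$ that are even-connected with respect to $e_1\cdots e_s$ via $u=p_0,\dots,p_{2k+1}=v$, such that for every even-connection $u''=p'_0,\dots,p'_{2k'+1}=v''$ with respect to $e_1\cdots e_s$ with $u'',v''\notin Y$ one has $k'\leq k$. Let $H=G'-Y$ and let $\operatorname{st}_H u$ be the set consisting of $u$ and its neighbors in $H$. Then $H-\operatorname{st}_H u$ is the disjoint union of a graph $G''$ obtained from $G$ by deleting vertices (an induced subgraph of $G$) and a set of isolated vertices, each of which is one of the new (polarization) vertices $x'$ of $G'$.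
   Context: $S=K[x_1,\dots,x_n]$ with the $x_i$ the vertices of $G$; $I(G)=(xy: xy\text{ an edge})$; edges identified with monomials; $(J:m)=\{f: fm\in J\}$; $J=(I(G)^{s+1}:e_1\cdots e_s)$ is generated by quadratic monomials. $J^{\mathrm{pol}}$ is generated by $x_ix_j$ ($i\ne j$) with $x_ix_j\in J$ and $x_kx_k'$ with $x_k^2\in J$; $G'$ has vertex set $V(G)\cup\{x_k': x_k^2\in J\}$ and edges $\{x_ix_j: i\ne j, x_ix_j\in J\}\cup\{x_kx_k': x_k^2\in J\}$. For a vertex set $W$, $H-W$ is the induced subgraph on the remaining vertices. Even-connection between $u,v$ (possibly equal) with respect to $e_1,\dots,e_s$: a sequence $p_0,\dots,p_{2k+1}$, $k\ge1$ (repeats allowed), with $p_0=u$, $p_{2k+1}=v$; each $p_{2l+1}p_{2l+2}$ ($0\le l\le k-1$) equal to some $e_i$; for every $i$, $|\{l: p_{2l+1}p_{2l+2}=e_i\}|\le|\{j: e_j=e_i\}|$; and each $p_rp_{r+1}$ ($0\le r\le2k$) an edge of $G$. Gap-free: no two vertex-disjoint edges $uv$, $xy$ with no edge between $\{u,v\}$ and $\{x,y\}$. *)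

(* finite simple graphs as symmetric irreflexive relations. *)
From mathcomp Require Import all_boot.
Set Implicit Arguments. Unset Strict Implicit. Unset Printing Implicit Defensive.

Section Defs.
Variable V : finType.

(* Monomials in the variables x_v (v : V) are exponent vectors V -> nat. *)
Definition mprod (s : seq (V * V)) : V -> nat :=
  fun z => \sum_(q <- s) ((z == q.1) + (z == q.2)).

Definition quad (a b : V) : V -> nat := fun z => (z == a) + (z == b).

Definition mdivides (m1 m2 : V -> nat) : Prop := forall z, m1 z <= m2 z.

(* A monomial m lies in the monomial ideal I(G)^t iff it is divisible by a
   product of t edges of G (generators of I(G)^t). *)
Definition in_edge_ideal_pow (e : rel V) (t : nat) (m : V -> nat) : Prop :=
  exists fs : seq (V * V),
    [/\ size fs = t, all (fun q => e q.1 q.2) fs & mdivides (mprod fs) m].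

(* x_a x_b \in J := (I(G)^(s+1) : e_1 ... e_s), where es = [e_1;...;e_s]. *)
Definition in_J (e : rel V) (es : seq (V * V)) (a b : V) : Prop :=
  in_edge_ideal_pow e (size es).+1 (fun z => quad a b z + mprod es z).

(* The graph G' of J^pol: vertices inl x (old vertex x of G) and inr x
   (new vertex x'), the latter present iff x^2 \in J. *)
Definition Gp_vert (e : rel V) (es : seq (V * V)) (w : V + V) : Prop :=
  match w with
  | inl _ => True
  | inr x => in_J e es x x
  end.

Definition Gp_edge (e : rel V) (es : seq (V * V)) (w1 w2 : V + V) : Prop :=
  match w1, w2 with
  | inl x, inl y => x <> y /\ in_J e es x y
  | inl x, inr y => x = y /\ in_J e es x x
  | inr x, inl y => x = y /\ in_J e es x x
  | inr _, inr _ => False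
  end.

Definition same_edge (q r : V * V) : bool :=
  ((q.1 == r.1) && (q.2 == r.2)) || ((q.1 == r.2) && (q.2 == r.1)).

Definition even_conn (e : rel V) (es : seq (V * V)) (u v : V) (k : nat)
    (p : seq V) : Prop :=
  [/\ 1 <= k, size p = (2 * k + 2)%N, nth u p 0 = u & nth u p (2 * k + 1) = v] /\
  [/\ (forall l, l < k -> (exists2 i, i < size es &
          same_edge (nth u p (2 * l + 1), nth u p (2 * l + 2)) (nth (u, u) es i))),
      (forall i, i < size es ->
          count (fun l => same_edge (nth u p (2 * l + 1), nth u p (2 * l + 2))
                                    (nth (u, u) es i)) (iota 0 k)
          <= count (same_edge (nth (u, u) es i)) es)
    & (forall r, r < 2 * k + 1 -> e (nth u p r) (nth u p r.+1))].

Definition gap_free (e : rel V) : Prop :=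
  forall a b x y, e a b -> e x y ->
    a != x -> a != y -> b != x -> b != y ->
    [|| e a x, e a y, e b x | e b y].

Definition H_vert (e : rel V) (es : seq (V * V)) (Y : {set V + V}) (w : V + V)
  : Prop := Gp_vert e es w /\ w \notin Y.

Definition star_H (e : rel V) (es : seq (V * V)) (Y : {set V + V}) (u : V)
    (w : V + V) : Prop :=
  w = inl u \/ (H_vert e es Y w /\ Gp_edge e es (inl u) w).

End Defs.

(* A product x_a x_b lies in J = (I(G)^(s+1) : e_1 ... e_s) exactly when a and b are joined
   by a walk a ~ c_1, c_1, c_2, ..., c_m ~ b alternating G-edges with pairs c_i that use
   the e_j at most with their multiplicity; m = 0 means that ab is an edge of G.
   Let x, y be old vertices of H outside st_H u, joined by such a walk q with m >= 1, and let p
   be the maximal even-connection from u to v.  If p and q together use some e_j too often,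
   cut p at the first such pair and continue along q: this joins u to x or y, putting it
   in st_H u.  Otherwise gap-freeness, applied to the first edge of p and the first pair of
   q, either again joins u to x or y, or glues q in front of p into an even-connection from
   x or y to v longer than p.  Hence m = 0, and by irreflexivity the new vertices are
   isolated. *)

From mathcomp Require Import all_boot zify.
Set Implicit Arguments. Unset Strict Implicit. Unset Printing Implicit Defensive.

Section SameEdge.
Variable V : finType.
Implicit Types (q r t : V * V) (s : seq (V * V)).

Lemma same_edge_refl q : same_edge q q.
Proof. by rewrite /same_edge !eqxx. Qed.

Lemma same_edge_sym q r : same_edge q r = same_edge r q.
Proof.
case: q r => a b [c d]; rewrite /same_edge /=.
by rewrite (eq_sym c a) (eq_sym d b) (eq_sym c b) (eq_sym d a) [(b == c) && _]andbC.
Qed.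

Lemma same_edge_trans q r t : same_edge q r -> same_edge r t -> same_edge q t.
Proof.
case: q => a b; case: r => c d; case: t => f g; rewrite /same_edge /=.
by case/orP=> /andP[/eqP-> /eqP->]; case/orP=> /andP[/eqP-> /eqP->];
  rewrite !eqxx ?orbT.
Qed.

Lemma same_edge_swap q r : same_edge q (r.2, r.1) = same_edge q r.
Proof. by rewrite /same_edge /= orbC. Qed.

Lemma same_edgeP q r :
  same_edge q r -> (q.1 = r.1 /\ q.2 = r.2) \/ (q.1 = r.2 /\ q.2 = r.1).
Proof. by case/orP=> /andP[/eqP-> /eqP->]; [left | right]. Qed.

Lemma eq_count_same_edge q r s :
  same_edge q r -> count (same_edge q) s = count (same_edge r) s.
Proof.
move=> qr; apply: eq_count => z; apply/idP/idP; last exact: same_edge_trans.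
by apply: same_edge_trans; rewrite same_edge_sym.
Qed.

Lemma quad_same_edge q r z : same_edge q r -> quad q.1 q.2 z = quad r.1 r.2 z.
Proof. by case/same_edgeP=> -[-> ->] //; rewrite /quad addnC. Qed.

Definition other (g : V * V) (c : V) := if c == g.1 then g.2 else g.1.

Lemma same_edge_other g c : (c == g.1) || (c == g.2) -> same_edge (c, other g c) g.
Proof.
rewrite /other /same_edge /=; case: ifP => [/eqP -> _|_ /= ->]; first by rewrite !eqxx.
by rewrite eqxx.
Qed.

Definition submset (bl es : seq (V * V)) :=
  forall q, count (same_edge q) bl <= count (same_edge q) es.

Lemma submset_refl bl : submset bl bl.
Proof. by []. Qed.

Lemma submset_cons_rem c g bl es :
  g \in es -> same_edge c g -> submset (c :: bl) es <-> submset bl (rem g es).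
Proof.
move=> ges cg; have cgE q : same_edge q c = same_edge q g.
  apply/idP/idP => [qc|qg]; first exact: same_edge_trans cg.
  by apply: same_edge_trans qg _; rewrite same_edge_sym.
split=> sub q; move: (sub q); rewrite (permP (perm_to_rem ges)) /= cgE;
  by case: (same_edge q g).
Qed.

End SameEdge.

Section Walks.
Variables (V : finType) (e : rel V).
Hypothesis e_sym : symmetric e.
Implicit Types (bl es : seq (V * V)).

(* An even-connection [a = p_0, ..., p_(2m+1) = b] is encoded as [alt_walk a bl b] with
   [bl = [(p_1, p_2); ...; (p_(2m-1), p_(2m))]]; the case [bl = [::]] is a single edge. *)
Fixpoint alt_walk (a : V) bl (b : V) : bool :=
  if bl is c :: bl' then e a c.1 && alt_walk c.2 bl' b else e a b.

Lemma alt_walk_cat a bl1 c bl2 b :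
  alt_walk a (bl1 ++ c :: bl2) b = alt_walk a bl1 c.1 && alt_walk c.2 bl2 b.
Proof. by elim: bl1 a => [|d bl1 IH] a //=; rewrite IH andbA. Qed.

Definition rev_pairs bl := rev (map (fun c => (c.2, c.1)) bl).

Lemma alt_walk_rev a bl b : alt_walk a bl b -> alt_walk b (rev_pairs bl) a.
Proof.
elim: bl a => [|[c d] bl IH] a /=; first by rewrite e_sym.
case/andP=> ac walk; rewrite /rev_pairs /= rev_cons -cats1.
by rewrite alt_walk_cat /= (IH _ walk) /= e_sym.
Qed.

Lemma count_rev_pairs q bl :
  count (same_edge q) (rev_pairs bl) = count (same_edge q) bl.
Proof. by rewrite count_rev count_map; apply: eq_count => r; apply: same_edge_swap. Qed.

Lemma submset_edges bl es :
  all (fun q => e q.1 q.2) es -> submset bl es -> all (fun q => e q.1 q.2) bl.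
Proof.
move=> ees sub; apply/allP => q qbl.
have : 0 < count (same_edge q) es.
  by apply: leq_trans (sub q); rewrite -has_count; apply/hasP; exists q; rewrite ?same_edge_refl.
rewrite -has_count => /hasP [g ges /same_edgeP qg]; have := allP ees g ges.
by case: qg => -[-> ->] //; rewrite e_sym.
Qed.

End Walks.

Section Monomials.
Variable V : finType.
Implicit Types (s fs es bl : seq (V * V)).

Lemma mprod_cons q s z : mprod (q :: s) z = quad q.1 q.2 z + mprod s z.
Proof. by rewrite /mprod big_cons. Qed.

Lemma mprod_rem g s z : g \in s -> mprod s z = quad g.1 g.2 z + mprod (rem g s) z.
Proof. by move=> gs; rewrite /mprod (perm_big _ (perm_to_rem gs)) big_cons. Qed.

Lemma mprod_gt0 s z : 0 < mprod s z -> exists2 q, q \in s & (z == q.1) || (z == q.2).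
Proof.
elim: s => [|q s IH]; first by rewrite /mprod big_nil.
rewrite mprod_cons /quad; case: ((z == q.1) || (z == q.2)) / boolP => [zq _|].
  by exists q; rewrite ?mem_head.
case/norP=> /negbTE-> /negbTE-> /IH[r rs zr].
by exists r; rewrite // in_cons rs orbT.
Qed.

Lemma sum_eq1 (a : V) : \sum_z (z == a : nat) = 1.
Proof. by rewrite (bigD1 a) //= eqxx big1 // => z /negbTE->. Qed.

Lemma sum_mprod s : \sum_z mprod s z = 2 * size s.
Proof.
elim: s => [|q s IH]; first by rewrite big1 // => z _; rewrite /mprod big_nil.
under eq_bigr => z _ do rewrite mprod_cons /quad.
by rewrite !big_split /= !sum_eq1 IH /=; lia.
Qed.

Lemma eq_of_leq_sum (f g : V -> nat) :
  (forall z, f z <= g z) -> \sum_z f z = \sum_z g z -> forall z, f z = g z.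
Proof.
move=> le_fg /eqP; rewrite (leqif_sum (fun z _ => leqif_eq (le_fg z))).
by move/forallP=> fg z; apply/eqP; apply: fg.
Qed.

Section EdgeRelation.
Variable e : rel V.
Hypothesis e_sym : symmetric e.

(* The walk [a ~ c1.1, c1 = (c1.1, c1.2), c1.2 ~ c2.1, ..., cm.2 ~ b] gives the factorisation
   x_a x_b * c1 ... cm = (a, c1.1) (c1.2, c2.1) ... (cm.2, b) into m+1 edges of G. *)
Lemma edge_factorisation_of_walk a bl es b :
  all (fun q => e q.1 q.2) es -> alt_walk e a bl b -> submset bl es ->
  exists fs, [/\ size fs = (size es).+1, all (fun q => e q.1 q.2) fs &
    forall z, mprod fs z = quad a b z + mprod es z].
Proof.
elim: bl es a => [|c bl IH] es a ees /=.
  by move=> ab _; exists ((a, b) :: es); split => //=; [rewrite ab | move=> z; rewrite mprod_cons].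
case/andP=> ac walk sub.
have : 0 < count (same_edge c) es by apply: leq_trans (sub c); rewrite /= same_edge_refl.
rewrite -has_count => /hasP [g ges cg].
have eesg : all (fun q => e q.1 q.2) (rem g es).
  by apply/allP => q /mem_rem qes; apply: (allP ees).
have [fs [size_fs efs mfs]] := IH _ _ eesg walk ((submset_cons_rem _ ges cg).1 sub).
exists ((a, c.1) :: fs); split => /=.
- by rewrite size_fs size_rem // prednK // -has_predT; apply/hasP; exists g.
- by rewrite ac.
- by move=> z; rewrite mprod_cons mfs (mprod_rem z ges) -(quad_same_edge z cg) /quad /=; lia.
Qed.

Lemma in_J_of_walk es a bl b :
  all (fun q => e q.1 q.2) es -> alt_walk e a bl b -> submset bl es -> in_J e es a b.
Proof.
move=> ees walk sub; have [fs [? ? mfs]] := edge_factorisation_of_walk ees walk sub.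
by exists fs; split => // z; rewrite mfs.
Qed.

Lemma mprod_peel fs a :
  all (fun q => e q.1 q.2) fs -> 0 < mprod fs a ->
  exists2 f, f \in fs & exists2 c, e a c &
    forall z, mprod fs z = quad a c z + mprod (rem f fs) z.
Proof.
move=> efs /mprod_gt0 [f ffs af]; have acf := same_edge_other af.
exists f => //; exists (other f a).
  by have := allP efs f ffs; case/same_edgeP: acf => -[<- <-] //; rewrite e_sym.
by move=> z; rewrite (mprod_rem z ffs) -(quad_same_edge z acf).
Qed.

Lemma walk_of_mprod es fs a b :
  all (fun q => e q.1 q.2) fs -> (forall z, mprod fs z = quad a b z + mprod es z) ->
  exists bl, alt_walk e a bl b /\ submset bl es.
Proof.
have [n] := ubnP (size es); elim: n es fs a => // n IH es fs a /ltnSE size_es efs mfs.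
have [|f ffs [c ac mfs_f]] := mprod_peel efs (_ : 0 < mprod fs a).
  by rewrite mfs /quad eqxx.
have [<-|cb] := eqVneq c b; first by exists [::]; split => //= q.
have : 0 < mprod es c by have := mfs c; rewrite mfs_f /quad eqxx (negbTE cb); lia.
case/mprod_gt0 => g ges /same_edge_other cg; set d := other g c in cg.
have [|||bl [walk sub]] := IH (rem g es) (rem f fs) d.
- by rewrite size_rem //; case: (es) ges size_es => //= _ es' _; lia.
- by apply/allP => q /mem_rem qfs; apply: (allP efs).
- move=> z; move: (mfs z); rewrite mfs_f (mprod_rem z ges) -(quad_same_edge z cg) /quad /=.
  lia.
by exists ((c, d) :: bl); split; [rewrite /= ac | rewrite (submset_cons_rem _ ges cg)].
Qed.

Lemma walk_of_in_J es a b :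
  in_J e es a b -> exists bl, alt_walk e a bl b /\ submset bl es.
Proof.
case=> fs [size_fs efs dvd]; apply: (walk_of_mprod efs); apply: eq_of_leq_sum dvd _.
by rewrite sum_mprod big_split /= sum_mprod size_fs /quad big_split /= !sum_eq1; lia.
Qed.

End EdgeRelation.
End Monomials.

Section EvenConnections.
Variables (V : finType) (e : rel V).
Implicit Types (bl es : seq (V * V)).

Fixpoint walk_seq (a : V) bl (b : V) : seq V :=
  if bl is c :: bl' then a :: c.1 :: walk_seq c.2 bl' b else [:: a; b].

Lemma size_walk_seq a bl b : size (walk_seq a bl b) = 2 * size bl + 2.
Proof. by elim: bl a => [|c bl IH] a //=; rewrite IH; lia. Qed.

Lemma nth_walk_seq0 z a bl b : nth z (walk_seq a bl b) 0 = a.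
Proof. by case: bl. Qed.

Lemma nth_walk_seq_last z a bl b : nth z (walk_seq a bl b) (2 * size bl + 1) = b.
Proof.
elim: bl a => [|c bl IH] a //.
by rewrite (_ : 2 * size (c :: bl) + 1 = (2 * size bl + 1).+2) ?IH //= ; lia.
Qed.

Lemma nth_walk_seq_pair z a bl b l : l < size bl ->
  (nth z (walk_seq a bl b) (2 * l + 1), nth z (walk_seq a bl b) (2 * l + 2))
  = nth (z, z) bl l.
Proof.
elim: bl a l => [|c bl IH] a [|l] // l_lt; first by rewrite /= nth_walk_seq0 -surjective_pairing.
have -> : 2 * l.+1 + 1 = (2 * l + 1).+2 by lia.
have -> : 2 * l.+1 + 2 = (2 * l + 2).+2 by lia.
exact: IH.
Qed.

Lemma walk_seq_edges z a bl b :
  alt_walk e a bl b -> all (fun q => e q.1 q.2) bl ->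
  forall r, r < 2 * size bl + 1 ->
    e (nth z (walk_seq a bl b) r) (nth z (walk_seq a bl b) r.+1).
Proof.
elim: bl a => [|c bl IH] a /=; first by move=> ab _ [|r].
case/andP=> ac walk /andP[ec ebl] [|[|r]] //= r_lt; first by rewrite nth_walk_seq0.
by apply: IH => //; move: r_lt; rewrite mulnS; lia.
Qed.

Lemma even_conn_of_walk es a bl b :
  symmetric e -> all (fun q => e q.1 q.2) es -> 0 < size bl ->
  alt_walk e a bl b -> submset bl es -> even_conn e es a b (size bl) (walk_seq a bl b).
Proof.
move=> e_sym ees bl_gt0 walk sub; have ebl := submset_edges e_sym ees sub.
split; first by rewrite size_walk_seq nth_walk_seq0 nth_walk_seq_last.
split; last exact: walk_seq_edges.
- move=> l l_lt; rewrite nth_walk_seq_pair //.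
  have : 0 < count (same_edge (nth (a, a) bl l)) es.
    by apply: leq_trans (sub _); rewrite -has_count; apply/hasP;
      exists (nth (a, a) bl l); rewrite ?mem_nth ?same_edge_refl.
  rewrite -has_count => /hasP [g ges lg].
  by exists (index g es); rewrite ?index_mem ?nth_index.
- move=> i _; apply: leq_trans (sub (nth (a, a) es i)); apply/eq_leq.
  rewrite (@eq_in_count _ _ (same_edge (nth (a, a) es i) \o nth (a, a) bl)); last first.
    by move=> l; rewrite mem_iota => /andP[_ l_lt]; rewrite /= nth_walk_seq_pair // same_edge_sym.
  by rewrite -count_map -/(mkseq _ _) mkseq_nth.
Qed.

Lemma alt_walk_nth z p j k :
  (forall r, 2 * j <= r < 2 * (j + k) + 1 -> e (nth z p r) (nth z p r.+1)) ->
  alt_walk e (nth z p (2 * j))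
    [seq (nth z p (2 * l + 1), nth z p (2 * l + 2)) | l <- iota j k]
    (nth z p (2 * (j + k) + 1)).
Proof.
elim: k j => [|k IH] j ep /=; first by rewrite addn0 addn1; apply: ep; lia.
rewrite addn1 ep /=; last by lia.
have -> : 2 * j + 2 = 2 * j.+1 by lia.
have -> : j + k.+1 = j.+1 + k by lia.
by apply: IH => r r_in; apply: ep; lia.
Qed.

Lemma walk_of_even_conn es u v k p :
  even_conn e es u v k p ->
  exists bl, [/\ size bl = k, alt_walk e u bl v & submset bl es].
Proof.
move=> [[k_gt0 size_p p0 pk] [pairs_in pairs_le edges_p]].
set pair := fun l => (nth u p (2 * l + 1), nth u p (2 * l + 2)).
exists (map pair (iota 0 k)); split; first by rewrite size_map size_iota.
  by have := @alt_walk_nth u p 0 k; rewrite p0 pk; apply=> r /andP[_ /edges_p].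
move=> q; have [/hasP [g ges qg]|no_q] := boolP (has (same_edge q) es).
  rewrite !(eq_count_same_edge _ qg) -(nth_index (u, u) ges) count_map.
  rewrite (eq_count (a2 := fun l => same_edge (pair l) (nth (u, u) es (index g es)))).
    by apply: pairs_le; rewrite index_mem.
  by move=> l; rewrite same_edge_sym.
suff -> : count (same_edge q) (map pair (iota 0 k)) = 0 by [].
apply/eqP; rewrite -leqn0 leqNgt -has_count; apply/hasP => -[r /mapP [l]].
rewrite mem_iota => /andP[_ /pairs_in [i i_lt li]] -> /same_edge_trans/(_ li) qi.
by case/hasP: no_q; exists (nth (u, u) es i); rewrite ?mem_nth.
Qed.

End EvenConnections.

Section Splicing.
Variables (V : finType) (e : rel V) (es : seq (V * V)).
Hypothesis e_sym : symmetric e.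
Implicit Types (bl bp bq : seq (V * V)).

Definition overflow bl q := count (same_edge q) es < count (same_edge q) bl.

Lemma submset_cat_no_overflow s bp bq :
  submset s bp -> ~~ has (overflow (bp ++ bq)) s -> submset bq es -> submset (s ++ bq) es.
Proof.
move=> sub_s no_ovf sub_bq q; rewrite count_cat.
have [/hasP [r rs qr]|no_q] := boolP (has (same_edge q) s).
  have := hasPn no_ovf r rs; rewrite /overflow -leqNgt count_cat.
  rewrite !(eq_count_same_edge _ qr) => le_es; apply: leq_trans le_es.
  by rewrite leq_add2r; apply: sub_s.
by move: no_q; rewrite has_count -leqNgt leqn0 => /eqP->; apply: sub_bq.
Qed.

Lemma overflow_split bp bq :
  submset bp es -> submset bq es -> has (overflow (bp ++ bq)) bp ->
  exists s1 t s2,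
    [/\ bp = s1 ++ t :: s2, submset (s1 ++ bq) es & has (same_edge t) bq].
Proof.
move=> sub_bp sub_bq has_ovf; have [t0 _ _] := hasP has_ovf.
set i := find (overflow (bp ++ bq)) bp; have i_lt : i < size bp by rewrite -has_find.
exists (take i bp), (nth t0 bp i), (drop i.+1 bp); split.
- by rewrite -(drop_nth t0 i_lt) cat_take_drop.
- apply: (submset_cat_no_overflow (bp := bp)) => //.
    by move=> q; rewrite -[X in _ <= count _ X](cat_take_drop i bp) count_cat; apply: leq_addr.
  by apply/negP => /find_ltn; rewrite ltnn.
- have := nth_find t0 has_ovf; rewrite -/i /overflow count_cat has_count.
  by have := sub_bp (nth t0 bp i); lia.
Qed.

Lemma walk_from_edge x s1 g s2 y t :
  alt_walk e x (s1 ++ g :: s2) y -> same_edge t g ->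
  exists rest, submset (t :: rest) (s1 ++ g :: s2) /\
    (alt_walk e t.2 rest x \/ alt_walk e t.2 rest y).
Proof.
rewrite alt_walk_cat => /andP[walk1 walk2] tg.
have count_t q : same_edge q t = same_edge q g.
  apply/idP/idP => [qt|qg]; first exact: same_edge_trans tg.
  by apply: same_edge_trans qg _; rewrite same_edge_sym.
case/same_edgeP: tg => -[_ t2].
- exists s2; split; last by right; rewrite t2.
  by move=> q; rewrite count_cat /= count_t; apply: leq_addl.
- exists (rev_pairs s1); split; last by left; rewrite t2; apply: alt_walk_rev.
  by move=> q; rewrite count_cat /= count_t count_rev_pairs; lia.
Qed.

Lemma splice_walk a s1 t s2 b x bq y :
  alt_walk e a (s1 ++ t :: s2) b -> alt_walk e x bq y ->
  has (same_edge t) bq -> submset (s1 ++ bq) es ->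
  exists bl, submset bl es /\ (alt_walk e a bl x \/ alt_walk e a bl y).
Proof.
rewrite alt_walk_cat => /andP[walk_s1 _] walk_bq t_bq sub.
case/split_find: t_bq walk_bq sub => g r1 r2 tg _; rewrite cat_rcons => walk_bq sub.
have [rest [sub_rest walk_rest]] := walk_from_edge walk_bq tg.
exists (s1 ++ t :: rest); split.
  by move=> q; apply: leq_trans (sub q); rewrite !count_cat leq_add2l -count_cat.
by rewrite !alt_walk_cat walk_s1; case: walk_rest; [left | right].
Qed.

End Splicing.

Section GapFree.
Variables (V : finType) (e : rel V).
Hypotheses (e_sym : symmetric e) (e_gap_free : gap_free e).

Lemma gap_free_adj a b x y : e a b -> e x y -> [|| e a x, e a y, e b x | e b y].
Proof.
move=> ab xy.
have [->|ax] := eqVneq a x; first by rewrite xy orbT.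
have [->|ay] := eqVneq a y; first by rewrite e_sym xy.
have [->|bx] := eqVneq b x; first by rewrite xy !orbT.
have [->|b_y] := eqVneq b y; first by rewrite (e_sym y x) xy !orbT.
exact: e_gap_free.
Qed.

Lemma gap_free_splice u p bp v x q bq y :
  alt_walk e u (p :: bp) v -> alt_walk e x (q :: bq) y -> e q.1 q.2 ->
  [\/ alt_walk e u (q :: bq) y, alt_walk e u [:: (q.2, q.1)] x,
      alt_walk e y (rev_pairs bq ++ (q.2, q.1) :: p :: bp) v
    | alt_walk e x (q :: p :: bp) v].
Proof.
move=> /= /andP[up walk_p] /andP[xq walk_q] eq.
case/or4P: (gap_free_adj up eq) => [uq1|uq2|pq1|pq2].
- by apply: Or41; rewrite /= uq1.
- by apply: Or42; rewrite /= uq2 e_sym.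
- by apply: Or43; rewrite alt_walk_cat alt_walk_rev //= e_sym pq1.
- by apply: Or44; rewrite /= xq e_sym pq2.
Qed.

End GapFree.

Section OffStar.
Variables (V : finType) (e : rel V) (es : seq (V * V)) (Y : {set V + V}).
Variables (u v : V) (k : nat) (p : seq V).
Hypotheses (e_sym : symmetric e) (e_gap_free : gap_free e).
Hypothesis ees : all (fun q => e q.1 q.2) es.
Hypotheses (vY : inl v \notin Y) (uv_conn : even_conn e es u v k p).
Hypothesis k_max : forall u2 v2 k2 p2, inl u2 \notin Y -> inl v2 \notin Y ->
  even_conn e es u2 v2 k2 p2 -> k2 <= k.

Lemma star_of_walk z bl :
  inl z \notin Y -> alt_walk e u bl z -> submset bl es -> star_H e es Y u (inl z).
Proof.
move=> zY walk sub; have J := in_J_of_walk ees walk sub.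
have [->|uz] := eqVneq z u; [by left | right].
by split; split => // /eqP; rewrite eq_sym (negbTE uz).
Qed.

Lemma size_walk_to_v z bl :
  inl z \notin Y -> alt_walk e z bl v -> submset bl es -> size bl <= k.
Proof.
case: bl => [//|c bl] zY walk sub.
exact: k_max zY vY (even_conn_of_walk e_sym ees _ walk sub).
Qed.

Lemma walk_off_star_nil x y bq :
  inl x \notin Y -> inl y \notin Y ->
  ~ star_H e es Y u (inl x) -> ~ star_H e es Y u (inl y) ->
  alt_walk e x bq y -> submset bq es -> bq = [::].
Proof.
move=> xY yY x_off y_off walk_q sub_q.
have x_unreached bl : alt_walk e u bl x -> submset bl es -> False.
  by move=> walk sub; apply: x_off (star_of_walk xY walk sub).
have y_unreached bl : alt_walk e u bl y -> submset bl es -> False.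
  by move=> walk sub; apply: y_off (star_of_walk yY walk sub).
have [bp [size_bp walk_p sub_p]] := walk_of_even_conn uv_conn.
have [ovf|no_ovf] := boolP (has (overflow es (bp ++ bq)) bp).
  have [s1 [t [s2 [bpE sub_s1 t_bq]]]] := overflow_split sub_p sub_q ovf.
  rewrite bpE in walk_p; exfalso.
  have [bl [sub [walk|walk]]] := splice_walk e_sym walk_p walk_q t_bq sub_s1.
    exact: x_unreached walk sub.
  exact: y_unreached walk sub.
have {no_ovf} sub_pq := submset_cat_no_overflow (submset_refl bp) no_ovf sub_q.
case: bp size_bp walk_p sub_p sub_pq => [|c bp] size_bp walk_p sub_p sub_pq.
  by have := uv_conn.1; case; rewrite -size_bp.
case: bq walk_q sub_q sub_pq => [//|d bq] walk_q sub_q sub_pq; exfalso.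
have ed : e d.1 d.2 by apply: (allP (submset_edges e_sym ees sub_q)); rewrite mem_head.
case: (gap_free_splice e_sym e_gap_free walk_p walk_q ed) => walk.
- exact: y_unreached walk sub_q.
- apply: x_unreached walk _ => q; apply: leq_trans (sub_q q).
  by rewrite /= same_edge_swap; lia.
- have sub : submset (rev_pairs bq ++ (d.2, d.1) :: c :: bp) es.
    move=> q; apply: leq_trans (sub_pq q).
    by rewrite !count_cat /= count_rev_pairs same_edge_swap; lia.
  have := size_walk_to_v yY walk sub.
  by rewrite size_cat /rev_pairs size_rev size_map -size_bp /=; lia.
- have sub : submset (d :: c :: bp) es.
    by move=> q; apply: leq_trans (sub_pq q); rewrite count_cat /=; lia.
  by have := size_walk_to_v xY walk sub; rewrite -size_bp /=; lia.
Qed.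

Lemma in_J_off_star x y :
  inl x \notin Y -> inl y \notin Y ->
  ~ star_H e es Y u (inl x) -> ~ star_H e es Y u (inl y) ->
  in_J e es x y -> e x y.
Proof.
move=> xY yY x_off y_off /(walk_of_in_J e_sym) [bl [walk sub]].
have bl_nil := walk_off_star_nil xY yY x_off y_off walk sub.
by rewrite bl_nil in walk.
Qed.

End OffStar.

Theorem lemma6p18 (V : finType) (e : rel V) (es : seq (V * V))
    (Y : {set V + V}) (u v : V) (k : nat) (p : seq V) :
  symmetric e -> irreflexive e -> gap_free e ->
  1 <= size es -> all (fun q => e q.1 q.2) es ->
  (forall w, w \in Y -> Gp_vert e es w) ->
  inl u \notin Y -> inl v \notin Y ->
  even_conn e es u v k p ->
  (forall u2 v2 k2 p2, inl u2 \notin Y -> inl v2 \notin Y ->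
      even_conn e es u2 v2 k2 p2 -> k2 <= k) ->
  forall w1 w2 : V + V,
    H_vert e es Y w1 -> ~ star_H e es Y u w1 ->
    H_vert e es Y w2 -> ~ star_H e es Y u w2 ->
    (Gp_edge e es w1 w2 <-> exists x y, [/\ w1 = inl x, w2 = inl y & e x y]).
Proof.
move=> e_sym e_irr e_gap_free _ ees _ _ vY uv_conn k_max w1 w2 [_ w1Y] w1_off [_ w2Y] w2_off.
have off_edge := in_J_off_star e_sym e_gap_free ees vY uv_conn k_max.
split; last first.
  case=> x [y [-> -> exy]]; split; first by move=> xy; rewrite xy e_irr in exy.
  exact: (in_J_of_walk (bl := [::]) ees).
case: w1 w2 => [x|x] [y|y] /= in w1Y w1_off w2Y w2_off * => //.
- by case=> _ /(off_edge _ _ w1Y w2Y w1_off w2_off) exy; exists x, y.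
- by case=> _ /(off_edge _ _ w1Y w1Y w1_off w1_off); rewrite e_irr.
- by case=> -> /(off_edge _ _ w2Y w2Y w2_off w2_off); rewrite e_irr.
Qed.
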